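(* Let $\mathbf{A}\in\mathbb{R}^{m_1\times n}$ ($m_1\ge1$) with rows $\mathbf{a}_1,\dots,\mathbf{a}_{m_1}$, $\mathbf{b}\in\mathbb{R}^{m_1}$, $\mathbf{W}\in\mathbb{R}^{m_2\times n}$, $\mathbf{q}\in\mathbb{R}^{m_2}$, $\chi=\{\mathbf{x}:\mathbf{A}\mathbf{x}\ge\mathbf{b},\ \mathbf{W}\mathbf{x}\ge\mathbf{q}\}$, observations $\mathbf{x}^1,\dots,\mathbf{x}^K\in\mathbb{R}^n$, and a big-M constant $M>0$. For $p\in\{1,\dots,n\}$ let $\mathbf{IL}(p)$ be the mixed-integer problem in variables $\mathbf{v}\in\{0,1\}^{m_1}$, $\mathbf{z}\in\mathbb{R}^n$, $\mathbf{E}=[\epsilon^1,\dots,\epsilon^K]$: $$\min\ \mathscr{D}(\mathbf{E},\mathbf{A})\ \text{ s.t. }\ \mathbf{b}\le\mathbf{A}\mathbf{z}\le\mathbf{b}+M(\mathbf{1}-\mathbf{v}),\ \mathbf{W}\mathbf{z}\ge\mathbf{q},\ \mathbf{z}=\mathbf{x}^k-\epsilon^k\ \forall k,\ \textstyle\sum_{j=1}^{m_1}v_j=p.$$ If $\chi$ has an extreme point at which $n$ of the relevant constraints $\mathbf{a}_j\mathbf{x}\ge b_j$ are tight, then $\mathbf{IL}(p)$ is feasible for all $p\in\{1,\dots,n\}$.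
   Context: Rows of $\mathbf{A}\mathbf{x}\ge\mathbf{b}$ are the relevant constraints. $\mathscr{D}\ge0$ is a user-chosen nonnegative distance measure on $\mathbf{E}$ and $\mathbf{A}$. $M$ is a big-M constant taken sufficiently large that the upper bounds $\mathbf{A}\mathbf{z}\le\mathbf{b}+M$ for constraints with $v_j=0$ are not restrictive on $\chi$. *)

From HB Require Import structures.
From mathcomp Require Import all_boot all_order all_algebra.
From mathcomp Require Export reals.
Set Implicit Arguments. Unset Strict Implicit. Unset Printing Implicit Defensive.
Import Order.TTheory GRing.Theory Num.Theory.
Local Open Scope ring_scope.

Definition vle (R : realType) (m : nat) (u w : 'cV[R]_m) : Prop :=
  forall i, u i 0 <= w i 0.

Definition chi (R : realType) (m1 m2 n : nat)
  (A : 'M[R]_(m1, n)) (b : 'cV[R]_m1) (W : 'M[R]_(m2, n)) (q : 'cV[R]_m2)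
  (x : 'cV[R]_n) : Prop :=
  vle b (A *m x) /\ vle q (W *m x).

Definition extreme_point (R : realType) (n : nat) (S : 'cV[R]_n -> Prop)
  (x : 'cV[R]_n) : Prop :=
  S x /\ forall y z t, S y -> S z -> 0 < t -> t < 1 ->
    x = t *: y + (1 - t) *: z -> y = z.

Definition IL_feasible_point (R : realType) (m1 m2 n K : nat)
  (A : 'M[R]_(m1, n)) (b : 'cV[R]_m1) (W : 'M[R]_(m2, n)) (q : 'cV[R]_m2)
  (X : 'I_K -> 'cV[R]_n) (M : R) (p : nat)
  (v : 'I_m1 -> bool) (z : 'cV[R]_n) (E : 'I_K -> 'cV[R]_n) : Prop :=
  vle b (A *m z) /\
  vle (A *m z) (b + M *: \col_j (1 - (v j)%:R)) /\
  vle q (W *m z) /\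
  (forall k, z = X k - E k) /\
  (\sum_(j < m1) (v j : nat))%N = p.

Definition IL_feasible (R : realType) (m1 m2 n K : nat)
  (A : 'M[R]_(m1, n)) (b : 'cV[R]_m1) (W : 'M[R]_(m2, n)) (q : 'cV[R]_m2)
  (X : 'I_K -> 'cV[R]_n) (M : R) (p : nat) : Prop :=
  exists v z E, IL_feasible_point A b W q X M p v z E.

From mathcomp Require Import all_boot all_order all_algebra reals.
Import Order.TTheory GRing.Theory Num.Theory.
Local Open Scope ring_scope.

(* The point x0 itself solves IL(p): activate any p of the n constraints that
   are tight at x0 and take eps^k = x^k - x0.  Tightness makes the activated
   big-M bounds b <= A x0 <= b hold, and the big-M hypothesis covers the rest. *)

Lemma subset_of_card (T : finType) (U : {set T}) (k : nat) :
  (k <= #|U|)%N -> exists2 S : {set T}, S \subset U & #|S| = k.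
Proof.
move=> /card_geqP[s [uniq_s size_s sU]].
exists [set x in s]; first by apply/subsetP => x; rewrite inE; apply: sU.
by rewrite cardsE (card_uniqP uniq_s).
Qed.

Lemma sum_indicator_card (T : finType) (S : {set T}) :
  (\sum_(j : T) ((j \in S) : nat))%N = #|S|.
Proof.
rewrite -sum1_card [RHS]big_mkcond.
by apply: eq_bigr => j _; case: (j \in S).
Qed.

Lemma bigM_bound_indicator (R : realType) (m n : nat) (A : 'M[R]_(m, n))
    (b : 'cV[R]_m) (M : R) (z : 'cV[R]_n) (S : {set 'I_m}) :
  (forall j, j \in S -> (A *m z) j 0 = b j 0) ->
  (forall j, (A *m z) j 0 <= b j 0 + M) ->
  vle (A *m z) (b + M *: \col_j (1 - (j \in S)%:R)).
Proof.
move=> tightS boundM j; rewrite ![in X in _ <= X]mxE.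
case: (boolP (j \in S)) => [jS | _].
  by rewrite subrr mulr0 addr0 tightS.
by rewrite subr0 mulr1.
Qed.

Theorem proposition4 (R : realType) (m1 m2 n K : nat)
  (A : 'M[R]_(m1, n)) (b : 'cV[R]_m1) (W : 'M[R]_(m2, n)) (q : 'cV[R]_m2)
  (X : 'I_K -> 'cV[R]_n) (M : R)
  (Hm1 : (1 <= m1)%N)
  (HM : 0 < M)
  (* big-M: the upper bounds A z <= b + M are not restrictive on chi *)
  (HMbig : forall x, chi A b W q x -> forall j, (A *m x) j 0 <= b j 0 + M)
  (* chi has an extreme point at which n of the constraints a_j x >= b_j
     are tight *)
  (Hext : exists x0 : 'cV[R]_n, extreme_point (chi A b W q) x0 /\
     exists T : {set 'I_m1}, #|T| = n /\
       forall j, j \in T -> (A *m x0) j 0 = b j 0) :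
  forall p : nat, (1 <= p <= n)%N -> IL_feasible A b W q X M p.
Proof.
move=> p /andP[_ le_pn].
have [x0 [[chi_x0 _] [T [cardT tightT]]]] := Hext.
have [S sST cardS] : exists2 S : {set 'I_m1}, S \subset T & #|S| = p.
  by apply: subset_of_card; rewrite cardT.
exists (fun j => j \in S), x0, (fun k => X k - x0); split; first exact: chi_x0.1.
split.
  apply: bigM_bound_indicator; last exact: HMbig.
  by move=> j jS; apply: tightT; apply: (subsetP sST).
split; first exact: chi_x0.2.
split; first by move=> k; rewrite opprB addrC subrK.
by rewrite sum_indicator_card.
Qed.
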